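(* Let $(Y,X,A)$ be jointly distributed with $Y,A\in\{0,1\}$, let $R=\mathbb{E}[Y\mid X,A]$ be the Bayes optimal regressor, and let $\ell:\{0,1\}^2\to\mathbb{R}$ be a loss function. Then there exists a predictor derived from $(R,A)$ that satisfies equalized odds and has expected loss $\mathbb{E}\,\ell(\cdot,Y)$ no larger than that of any (possibly randomized) predictor $\widehat{Y}(X,A)\in\{0,1\}$ satisfying equalized odds. The same holds with equalized odds replaced by equal opportunity.
   Context: A predictor $\widehat{Y}\in\{0,1\}$ satisfies equalized odds if $\widehat{Y}$ and $A$ are independent conditional on $Y$, i.e. $\Pr\{\widehat{Y}=1\mid A=0,Y=y\}=\Pr\{\widehat{Y}=1\mid A=1,Y=y\}$ for $y\in\{0,1\}$. It satisfies equal opportunity if $\Pr\{\widehat{Y}=1\mid A=0,Y=1\}=\Pr\{\widehat{Y}=1\mid A=1,Y=1\}$. A predictor is derived from $(R,A)$ if it is a possibly randomized function of $(R,A)$ alone (randomness independent of everything else). *)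

From HB Require Import structures.
From mathcomp Require Import all_boot all_order all_algebra.
From mathcomp Require Import all_classical all_reals all_analysis.
Set Implicit Arguments. Unset Strict Implicit. Unset Printing Implicit Defensive.
Import Order.TTheory GRing.Theory Num.Theory.
Import numFieldNormedType.Exports.
Local Open Scope classical_set_scope.
Local Open Scope ring_scope.

(* A (possibly randomized) predictor Yhat(X,A) in {0,1} whose randomness is
   independent of everything else is represented by its kernel
     p : TX -> bool -> R,   p x a = Pr{Yhat = 1 | X = x, A = a}.
   Then Pr{Yhat = 1, E} = E[ p(X,A) 1_E ] for every event E determined by
   (X, A, Y). *)

Section Fairness.
Context {R : realType} {dO : measure_display} {Omega : measurableType dO}
  (P : probability Omega R)
  {dX : measure_display} {TX : measurableType dX}
  (X : Omega -> TX) (A Y : Omega -> bool).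

Definition randomized_predictor (p : TX -> bool -> R) : Prop :=
  (forall x a, 0 <= p x a <= 1) /\ (forall a, measurable_fun setT (p ^~ a)).

Definition ev_AY (a y : bool) : set Omega := [set w | A w = a /\ Y w = y].

Definition prob_AY (a y : bool) : R := fine (P (ev_AY a y)).

Definition prob_pos_AY (p : TX -> bool -> R) (a y : bool) : R :=
  Rintegral P (ev_AY a y) (fun w => p (X w) (A w)).

(* Pr{Yhat = 1 | A = a, Y = y}  (ratio; MathComp convention x / 0 = 0) *)
Definition cond_rate (p : TX -> bool -> R) (a y : bool) : R :=
  prob_pos_AY p a y / prob_AY a y.

Definition equalized_odds (p : TX -> bool -> R) : Prop :=
  forall y : bool, cond_rate p false y = cond_rate p true y.

Definition equal_opportunity (p : TX -> bool -> R) : Prop :=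
  cond_rate p false true = cond_rate p true true.

Definition expected_loss (l : bool -> bool -> R) (p : TX -> bool -> R) : R :=
  Rintegral P setT (fun w =>
    p (X w) (A w) * l true (Y w) + (1 - p (X w) (A w)) * l false (Y w)).

(* r(X, A) is (a version of) the conditional expectation E[Y | X, A]:
   r(X,A) is sigma(X,A)-measurable and integrable, and
   E[Y 1_G] = E[r(X,A) 1_G] for every G in sigma(X,A); the sets
   {X in B, A = a} (B measurable) generate sigma(X,A) and every element of
   sigma(X,A) is a finite disjoint union of such sets. *)
Definition bayes_regressor (r : TX -> bool -> R) : Prop :=
  (forall a, measurable_fun setT (r ^~ a)) /\
  P.-integrable setT (fun w => (r (X w) (A w))%:E) /\
  forall (B : set TX) (a : bool), measurable B ->
    Rintegral P (X @^-1` B `&` [set w | A w = a]) (fun w => ((Y w)%:R : R)) =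
    Rintegral P (X @^-1` B `&` [set w | A w = a]) (fun w => r (X w) (A w)).

(* a randomized predictor derived from (R, A): a kernel q(rho, a) =
   Pr{Yhat = 1 | R = rho, A = a}, measurable in rho, with values in [0,1] *)
Definition derived_kernel (q : R -> bool -> R) : Prop :=
  (forall rho a, 0 <= q rho a <= 1) /\ (forall a, measurable_fun setT (q ^~ a)).

Definition derived_predictor (q : R -> bool -> R) (r : TX -> bool -> R) :
  TX -> bool -> R := fun x a => q (r x a) a.

End Fairness.

(* A predictor enters the fairness constraints and the expected loss only
   through the four masses P{Yhat = 1, A = a, Y = y}: each constraint is a
   closed condition on them and the loss is affine in them.  Since
   R = E[Y | X, A], the true-positive mass P{Yhat = 1, A = a, Y = 1} of a
   predictor g(X, A) equals E[g(X, a) R; A = a], so by the Neyman-Pearson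
   lemma it is maximised, among predictors with a given positive mass
   P{Yhat = 1, A = a}, by a randomized threshold test on R.  This maximum is a
   monotone 1-Lipschitz function of the positive mass, and the attainable
   (true-positive, false-positive) pairs of group a form the closed region
   between its graph and the graph reflected by complementing predictors;
   every point of the region is attained by a mixture of two threshold tests,
   i.e. by a predictor derived from (R, A).  The fair attainable statistics
   thus form a compact set on which the affine loss attains its minimum, and a
   derived predictor realising the minimiser proves the theorem. *)

From HB Require Import structures.
From mathcomp Require Import all_boot all_order all_algebra.
From mathcomp Require Import all_classical all_reals all_analysis.
From mathcomp Require Import ring lra.
Set Implicit Arguments.
Unset Strict Implicit.
Unset Printing Implicit Defensive.
Import Order.TTheory GRing.Theory Num.Theory.
Import numFieldNormedType.Exports.
Local Open Scope classical_set_scope.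
Local Open Scope ring_scope.

Section RealFacts.
Variable R : realFieldType.
Implicit Types x y t lo hi : R.

Lemma exists_convex_combination lo hi t : lo <= t <= hi ->
  exists2 c, 0 <= c <= 1 & c * hi + (1 - c) * lo = t.
Proof.
move=> /andP[lot thi]; have [lohi|] := ltrP lo hi.
  exists ((t - lo) / (hi - lo)); last by field; rewrite subr_eq0 gt_eqF.
  have hilo : 0 < hi - lo by rewrite subr_gt0.
  by rewrite divr_ge0 ?ler_pdivrMr //= ?mul1r; lra.
by move=> hilo; exists 0; rewrite ?lexx ?ler01 //; lra.
Qed.

Definition clamp lo hi x := Num.max lo (Num.min x hi).

Lemma clamp_id lo hi x : lo <= x <= hi -> clamp lo hi x = x.
Proof.
by move=> /andP[lox xhi]; rewrite /clamp (min_l xhi) (max_r lox).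
Qed.

Lemma clamp_in lo hi x : lo <= hi -> lo <= clamp lo hi x <= hi.
Proof.
move=> lohi; rewrite /clamp le_max lexx /= ge_max lohi /=.
by rewrite ge_min lexx orbT.
Qed.

Lemma clamp_1lipschitz lo hi x y : `|clamp lo hi x - clamp lo hi y| <= `|x - y|.
Proof.
have := ler_norm (x - y); have := ler_norm (y - x); rewrite distrC => xy yx.
rewrite /clamp /Num.max /Num.min ler_norml.
case: (ltrP x hi) => ?; case: (ltrP y hi) => ?;
  by do 2 case: ltrP => ?; apply/andP; split; lra.
Qed.

End RealFacts.

Lemma le0_le_divn (R : archiFieldType) (x c : R) :
  (forall k, x <= c / k.+1%:R) -> x <= 0.
Proof.
move=> xc; rewrite leNgt; apply/negP => x0.
have := xc (Num.truncn (c / x)); rewrite ler_pdivlMr ?ltr0n // mulrC -ler_pdivlMr //.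
by rewrite leNgt truncnS_gt.
Qed.

Lemma exists_invn_lt (R : archiFieldType) (e : R) : 0 < e -> exists k : nat, k.+1%:R^-1 < e.
Proof.
move=> e0; exists (Num.truncn e^-1).
by rewrite -[X in _ < X]invrK ltf_pV2 ?posrE ?ltr0n ?invr_gt0 ?truncnS_gt.
Qed.

Section Staircase.
Variable R : realFieldType.

Definition count_le (k : nat) (y : R) : R := \sum_(j < k) ((j.+1)%:R <= y)%R%:R.

Lemma count_le_bound k y : 0 <= y <= k%:R -> count_le k y <= y <= count_le k y + 1.
Proof.
elim: k y => [|k IH] y /andP[y0 yk]; first by rewrite /count_le big_ord0; lra.
rewrite /count_le big_ord_recr /= -/(count_le k y).
have [yk'|ky] := lerP y k%:R.
  have -> : (k.+1%:R <= y) = false by rewrite leNgt (le_lt_trans yk') ?ltr_nat.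
  by rewrite addr0; apply: IH; rewrite y0.
have full : count_le k y = k%:R.
  rewrite /count_le (eq_bigr (fun _ => 1)) ?sumr_const ?card_ord //.
  by move=> j _; rewrite (@le_trans _ _ k%:R) ?ler_nat ?ltn_ord // ltW.
rewrite full; move: yk; rewrite -natr1 => yk.
by case: (leP (k%:R + 1) y) => /= ?; apply/andP; split; lra.
Qed.

Definition stair (k : nat) (z : R) : R := k%:R^-1 * count_le k (k%:R * z).

Lemma stair_ge0 k z : 0 <= stair k z.
Proof. by rewrite mulr_ge0 ?invr_ge0 ?ler0n ?sumr_ge0 // => j _; exact: ler0n. Qed.

Lemma stair_approx k z : 0 <= z <= 1 -> 0 <= z - stair k.+1 z <= k.+1%:R^-1.
Proof.
move=> /andP[z0 z1]; have kpos : 0 < k.+1%:R :> R by rewrite ltr0n.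
have := @count_le_bound k.+1 (k.+1%:R * z).
rewrite mulr_ge0 ?ler0n //= ler_piMr // => /(_ isT).
rewrite /stair; set y := k.+1%:R * z => /andP[lo hi].
have -> : z = k.+1%:R^-1 * y by rewrite /y mulKf // gt_eqF.
rewrite -mulrBr pmulr_rge0 ?invr_gt0 //; apply/andP; split; first lra.
by rewrite -[X in _ <= X]mulr1 ler_pM2l ?invr_gt0 //; lra.
Qed.

End Staircase.

Section ExtendedRealLimits.
Variable R : realFieldType.
Implicit Types (u : nat -> \bar R) (l c : \bar R).

Lemma cvg_ereal_le u l c : u k @[k --> \oo] --> l -> (forall k, (u k <= c)%E) -> (l <= c)%E.
Proof.
by move=> ul uc; apply: (closed_cvg _ (@closed_ereal_ge_ereal R c) _ _ ul); exact: nearW.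
Qed.

Lemma cvg_ereal_ge u l c : u k @[k --> \oo] --> l -> (forall k, (c <= u k)%E) -> (c <= l)%E.
Proof.
by move=> ul uc; apply: (closed_cvg _ (@closed_ereal_le_ereal R c) _ _ ul); exact: nearW.
Qed.

End ExtendedRealLimits.

Lemma fst_continuous (T U : topologicalType) : continuous (@fst T U).
Proof. by move=> x; exact: cvg_fst. Qed.

Lemma snd_continuous (T U : topologicalType) : continuous (@snd T U).
Proof. by move=> x; exact: cvg_snd. Qed.

Section ClosedSets.
Variables (T : topologicalType) (R : realType).
Implicit Types f g : T -> R.

Lemma closed_fun_le f g : continuous f -> continuous g -> closed [set x | f x <= g x].
Proof.
move=> cf cg; have -> : [set x | f x <= g x] = (fun x => g x - f x) @^-1` [set y | 0 <= y].
  by apply/seteqP; split => x /=; rewrite subr_ge0.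
apply: preimage_closed; last exact: closed_ge.
by move=> x _; exact: (continuousB (cg x) (cf x)).
Qed.

Lemma closed_fun_eq f g : continuous f -> continuous g -> closed [set x | f x = g x].
Proof.
move=> cf cg; have -> : [set x | f x = g x] = [set x | f x <= g x] `&` [set x | g x <= f x].
  apply/seteqP; split => x /=; first by move=> ->; rewrite lexx.
  by move=> [? ?]; apply/eqP; rewrite eq_le; apply/andP.
by apply: closedI; exact: closed_fun_le.
Qed.

End ClosedSets.

Lemma continuous_1lipschitz (R : realType) (f : R -> R) :
  (forall x y, `|f x - f y| <= `|x - y|) -> continuous f.
Proof.
move=> f1 x; apply/cvgrPdist_lt => e e0; near=> y.
by apply: le_lt_trans (f1 x y) _; near: y; apply/nbhs_ballP; exists e.
Unshelve. all: by end_near.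
Qed.

(** * Measurable functions with values in [0, 1] *)

Lemma indic_mkset {T : Type} {R : pzRingType} (b : T -> bool) x :
  \1_[set y | b y] x = (b x)%:R :> R.
Proof.
rewrite indicE; case: (boolP (b x)) => [bx|/negP bx].
  by rewrite (mem_set (bx : [set y | b y] x)).
by rewrite (memNset (bx : ~ [set y | b y] x)).
Qed.

Definition mfun01 {d} {T : measurableType d} {R : realType} (f : T -> R) :=
  measurable_fun setT f /\ forall x, 0 <= f x <= 1.

Section Mfun01.
Context {d} {T : measurableType d} {R : realType}.
Implicit Types f g : T -> R.

Lemma mfun01_cst (c : R) : 0 <= c <= 1 -> mfun01 (fun _ : T => c).
Proof. by split; [exact: measurable_cst|]. Qed.

Lemma mfun01_comp {d'} {T' : measurableType d'} (phi : T' -> R) (u : T -> T') :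
  measurable_fun setT u -> mfun01 phi -> mfun01 (fun x => phi (u x)).
Proof. by move=> mu [mphi phi01]; split => // ; exact: measurableT_comp mphi mu. Qed.

Lemma mfun01_indic (B : set T) : measurable B -> mfun01 (\1_B : T -> R).
Proof.
move=> mB; split; first exact: measurable_realfun.measurable_indic.
by move=> x; rewrite indicE; case: (_ \in _); rewrite lexx ler01.
Qed.

Lemma mfun01_convex (c : R) f g : 0 <= c <= 1 -> mfun01 f -> mfun01 g ->
  mfun01 (fun x => c * f x + (1 - c) * g x).
Proof.
move=> /andP[c0 c1] [mf f01] [mg g01]; split.
  apply: measurable_realfun.measurable_funD;
    apply: measurable_realfun.measurable_funM => //; exact: measurable_cst.
by move=> x; have := f01 x; have := g01 x => /andP[? ?] /andP[? ?]; apply/andP; nra.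
Qed.

Lemma mfun01_1m f : mfun01 f -> mfun01 (fun x => 1 - f x).
Proof.
move=> [mf f01]; split.
  by apply: measurable_realfun.measurable_funB => //; exact: measurable_cst.
by move=> x; have := f01 x => /andP[? ?]; apply/andP; lra.
Qed.

Lemma bounded_normr_le f c (D : set T) : (forall x, `|f x| <= c) -> [bounded f x | x in D].
Proof.
move=> fc; exists c; split; first exact: num_real.
by move=> M cM x _ /=; exact: le_trans (fc x) (ltW cM).
Qed.

Lemma normr_mfun01 f x : mfun01 f -> `|f x| <= 1.
Proof. by move=> [_ f01]; have /andP[f0 f1] := f01 x; rewrite ger0_norm. Qed.

Lemma integrable_bounded_mul (mu : {measure set T -> \bar R}) (D : set T) f h c :
  measurable D -> measurable_fun setT f -> (forall x, `|f x| <= c) ->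
  mu.-integrable D (EFin \o h) -> mu.-integrable D (EFin \o (fun x => f x * h x)).
Proof.
move=> mD mf fc ih.
apply: (eq_integrable mD ((EFin \o f) \* (EFin \o h))%E) => [x _ //|].
exact: integrableMr (measurable_funS _ (subsetT _) mf) (bounded_normr_le _ fc) ih.
Qed.

Lemma integrable_mfun01_mul (mu : {measure set T -> \bar R}) (D : set T) f h :
  measurable D -> mfun01 f -> mu.-integrable D (EFin \o h) ->
  mu.-integrable D (EFin \o (fun x => f x * h x)).
Proof.
move=> mD f01; have [mf _] := f01.
by apply: integrable_bounded_mul => // x; exact: normr_mfun01.
Qed.

Lemma measurable_superlevel f t : measurable_fun setT f -> measurable [set x | t <= f x].
Proof.
move=> mf; have -> : [set x | t <= f x] = f @^-1` `[t, +oo[%classic.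
  by apply/seteqP; split => x; rewrite /= in_itv /= andbT.
by rewrite -[X in measurable X]setTI; exact: mf (measurable_itv _).
Qed.

Lemma measurable_strict_superlevel f t : measurable_fun setT f -> measurable [set x | t < f x].
Proof.
move=> mf; have -> : [set x | t < f x] = f @^-1` `]t, +oo[%classic.
  by apply/seteqP; split => x; rewrite /= in_itv /= andbT.
by rewrite -[X in measurable X]setTI; exact: mf (measurable_itv _).
Qed.

Lemma stair_indicE f k x :
  stair k (f x) = \sum_(j < k) k%:R^-1 * \1_[set y | (j.+1)%:R <= k%:R * f y] x.
Proof. by rewrite /stair mulr_sumr; apply: eq_bigr => j _; rewrite indic_mkset. Qed.

Lemma mfun01_stair f k : mfun01 f -> mfun01 (fun x => stair k.+1 (f x)).
Proof.
move=> [mf f01]; split => [|x]; last first.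
  have /andP[? ?] := stair_approx k (f01 x); have /andP[? ?] := f01 x.
  by rewrite stair_ge0; lra.
under eq_fun do rewrite stair_indicE.
apply: measurable_sum => j; apply: measurable_realfun.measurable_funM.
  exact: measurable_cst.
apply/measurable_realfun.measurable_indic/measurable_superlevel.
exact/measurable_realfun.measurable_funM/mf/measurable_cst.
Qed.

Section AnyMeasure.
Variables (mu : {measure set T -> \bar R}) (D : set T).
Hypothesis mD : measurable D.

Lemma Rintegral_indic (S : set T) : measurable S ->
  \int[mu]_(x in D) \1_S x = fine (mu (S `&` D)).
Proof. by move=> mS; rewrite /Rintegral integral_indic. Qed.

Lemma integrableZl_EFin (c : R) f : mu.-integrable D (EFin \o f) ->
  mu.-integrable D (EFin \o (fun x => c * f x)).
Proof. by move=> /(integrableZl mD c); apply: eq_integrable => // x _; rewrite /= EFinM. Qed.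

Lemma integrableB_EFin f g : mu.-integrable D (EFin \o f) ->
  mu.-integrable D (EFin \o g) -> mu.-integrable D (EFin \o (fun x => f x - g x)).
Proof.
move=> fi gi; have := integrableB mD fi gi.
by apply: eq_integrable => // x _; rewrite /= EFinB.
Qed.

Lemma Rintegral_sum (I : Type) (s : seq I) (F : I -> T -> R) :
  (forall i, mu.-integrable D (EFin \o F i)) ->
  \int[mu]_(x in D) \sum_(i <- s) F i x = \sum_(i <- s) \int[mu]_(x in D) F i x.
Proof.
move=> iF; elim: s => [|i s IH].
  by under eq_Rintegral do rewrite big_nil; rewrite Rintegral_cst // mul0r big_nil.
under eq_Rintegral do rewrite big_cons.
rewrite RintegralD // ?IH ?big_cons //.
apply: (eq_integrable mD (fun x => \sum_(i <- s) (F i x)%:E)%E) => [x _|].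
  by rewrite /= sumEFin.
by apply: integrable_sum => // j _; exact: iF.
Qed.

Lemma le_normr_Rintegral_mul f h c : measurable_fun setT f ->
  (forall x, `|f x| <= c) -> mu.-integrable D (EFin \o h) ->
  `|\int[mu]_(x in D) (f x * h x)| <= c * \int[mu]_(x in D) `|h x|.
Proof.
move=> mf fc ih; have ifh := integrable_bounded_mul mD mf fc ih.
rewrite -RintegralZl //; last exact: integrable_norm.
apply: le_trans (le_normr_Rintegral mD ifh) _.
apply: le_Rintegral => //; first exact: integrable_norm.
- exact: integrableZl (integrable_norm ih).
- by move=> x _; rewrite normrM ler_wpM2r.
Qed.

End AnyMeasure.

Variable mu : {finite_measure set T -> \bar R}.

Lemma mfun01_integrable (D : set T) f : measurable D -> mfun01 f ->
  mu.-integrable D (EFin \o f).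
Proof.
move=> mD f01; have [mf _] := f01.
apply: measurable_bounded_integrable => //.
- by rewrite ltey_eq fin_num_measure.
- exact: measurable_funS mf.
- by apply: (bounded_normr_le (c := 1)) => x; exact: normr_mfun01.
Qed.

Lemma Rintegral_mfun01_in (D : set T) f : measurable D -> mfun01 f ->
  0 <= \int[mu]_(x in D) f x <= fine (mu D).
Proof.
move=> mD f01; have [_ f01'] := f01.
apply/andP; split; first by apply: Rintegral_ge0 => x _; have /andP[] := f01' x.
rewrite -[X in _ <= X]mul1r -Rintegral_cst //.
apply: le_Rintegral => //; first exact: mfun01_integrable.
- by apply: mfun01_integrable => //; apply: mfun01_cst; rewrite ler01 lexx.
- by move=> x _; have /andP[] := f01' x.
Qed.

Lemma Rintegral_convex_comb (D : set T) c f g : measurable D -> mfun01 f -> mfun01 g ->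
  \int[mu]_(x in D) (c * f x + (1 - c) * g x) =
  c * \int[mu]_(x in D) f x + (1 - c) * \int[mu]_(x in D) g x.
Proof.
move=> mD f01 g01; have fi := mfun01_integrable mD f01; have gi := mfun01_integrable mD g01.
by rewrite RintegralD ?RintegralZl //; exact: integrableZl_EFin.
Qed.

Lemma Rintegral_1m (D : set T) f : measurable D -> mfun01 f ->
  \int[mu]_(x in D) (1 - f x) = fine (mu D) - \int[mu]_(x in D) f x.
Proof.
move=> mD f01; rewrite RintegralB ?Rintegral_cst ?mul1r //; last exact: mfun01_integrable.
by apply: mfun01_integrable => //; apply: mfun01_cst; rewrite ler01 lexx.
Qed.

End Mfun01.

(** * Integrals of functions of X *)

Section IndicatorExtension.
Context {d dX} {T : measurableType d} {TX : measurableType dX} {R : realType}.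
Variables (mu : {finite_measure set T -> \bar R}) (X : T -> TX) (D E : set T) (h : T -> R).
Hypotheses (mX : measurable_fun setT X) (mD : measurable D) (mE : measurable E).
Hypothesis ih : mu.-integrable D (EFin \o h).
Hypothesis indic_eq : forall B, measurable B ->
  \int[mu]_(w in D) (\1_B (X w) * h w) = \int[mu]_(w in E) \1_B (X w).

Lemma Rintegral_simple_eq (I : Type) (s : seq I) (c : I -> R) (B : I -> set TX) :
  (forall i, measurable (B i)) ->
  \int[mu]_(w in D) ((\sum_(i <- s) c i * \1_(B i) (X w)) * h w) =
  \int[mu]_(w in E) \sum_(i <- s) c i * \1_(B i) (X w).
Proof.
move=> mB; have BX i : mfun01 (fun w => \1_(B i) (X w) : R).
  by apply: mfun01_comp => //; exact: mfun01_indic.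
under eq_Rintegral do rewrite mulr_suml.
rewrite !Rintegral_sum //.
- apply: eq_bigr => i _; under eq_Rintegral do rewrite -mulrA.
  rewrite !RintegralZl ?indic_eq //; last exact: integrable_mfun01_mul.
  exact: mfun01_integrable.
- by move=> i; apply: integrableZl_EFin => //; exact: (mfun01_integrable mu mE (BX i)).
- move=> i; apply: (eq_integrable mD (EFin \o (fun w => c i * (\1_(B i) (X w) * h w)))).
    by move=> w _; rewrite /= mulrA.
  by apply: integrableZl_EFin => //; exact: integrable_mfun01_mul.
Qed.

Lemma Rintegral_stair_eq (g : TX -> R) k : mfun01 g ->
  \int[mu]_(w in D) (stair k (g (X w)) * h w) = \int[mu]_(w in E) stair k (g (X w)).
Proof.
move=> [mg _]; under eq_Rintegral do rewrite (stair_indicE g).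
under [RHS]eq_Rintegral do rewrite (stair_indicE g).
apply: Rintegral_simple_eq => j.
exact/measurable_superlevel/measurable_realfun.measurable_funM/mg/measurable_cst.
Qed.

(* Staircase functions of g are simple functions of X approximating g uniformly. *)
Lemma Rintegral_comp_eq_of_indic (g : TX -> R) : mfun01 g ->
  \int[mu]_(w in D) (g (X w) * h w) = \int[mu]_(w in E) g (X w).
Proof.
move=> g01; have [mgX gX01] := mfun01_comp mX g01.
apply/eqP; rewrite -subr_eq0 -normr_le0.
apply: (@le0_le_divn _ _ (\int[mu]_(w in D) `|h w| + fine (mu E))) => k.
have sX01 := mfun01_comp mX (mfun01_stair k g01); have [msX _] := sX01.
pose u w := g (X w) - stair k.+1 (g (X w)).
have m_u : measurable_fun setT u by exact: measurable_realfun.measurable_funB.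
have ub w : `|u w| <= k.+1%:R^-1.
  by have /andP[u0 u1] := stair_approx k (gX01 w); rewrite ger0_norm.
have -> : \int[mu]_(w in D) (g (X w) * h w) - \int[mu]_(w in E) g (X w) =
    \int[mu]_(w in D) (u w * h w) - \int[mu]_(w in E) (u w * 1).
  under [in RHS]eq_Rintegral do rewrite mulrBl.
  under [X in _ = _ - X]eq_Rintegral do rewrite mulr1.
  rewrite !RintegralB ?Rintegral_stair_eq //; first lra.
  - by apply: mfun01_integrable.
  - by apply: mfun01_integrable => //; exact: sX01.
  - exact: integrable_mfun01_mul.
  - exact: integrable_mfun01_mul sX01 ih.
apply: le_trans (ler_normB _ _) _; rewrite mulrDl !(mulrC _ k.+1%:R^-1).
apply: lerD; first exact: le_normr_Rintegral_mul.
apply: le_trans (le_normr_Rintegral_mul _ _ ub _) _ => //.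
  by apply: mfun01_integrable => //; apply: mfun01_cst; rewrite lexx ler01.
by rewrite Rintegral_cst // normr1 mul1r.
Qed.

End IndicatorExtension.

(** * The Neyman-Pearson lemma *)

Section ThresholdTest.
Variable R : realType.

Definition threshold_test (t gam z : R) : R :=
  (1 - gam) * (t < z)%R%:R + gam * (t <= z)%R%:R.

Lemma threshold_test_indicE t gam z : threshold_test t gam z =
  (1 - gam) * \1_[set z | t < z] z + (1 - (1 - gam)) * \1_[set z | t <= z] z.
Proof. by rewrite !indic_mkset subKr. Qed.

Lemma mfun01_threshold_test t gam : 0 <= gam <= 1 -> mfun01 (threshold_test t gam).
Proof.
move=> gam01; rewrite (funext (@threshold_test_indicE t gam)).
apply: mfun01_convex; first lra.
  by apply: mfun01_indic; apply: (measurable_strict_superlevel (f := id)).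
by apply: mfun01_indic; apply: (measurable_superlevel (f := id)).
Qed.

Lemma threshold_test_sign t gam z v : 0 <= gam <= 1 -> 0 <= v <= 1 ->
  0 <= (threshold_test t gam z - v) * (z - t).
Proof.
move=> /andP[gam0 gam1] /andP[v0 v1]; rewrite /threshold_test.
case: (ltgtP t z) => tz /=; last by rewrite tz subrr mulr0.
  by rewrite !mulr1; apply: mulr_ge0; lra.
by rewrite !mulr0 addr0 sub0r mulNr -mulrN; apply: mulr_ge0; lra.
Qed.

End ThresholdTest.

Section NeymanPearson.
Context {d} {T : measurableType d} {R : realType}.
Variables (mu : {finite_measure set T -> \bar R}) (D : set T) (rho : T -> R).
Hypotheses (mD : measurable D) (mrho : measurable_fun setT rho).

Definition rho_ge (t : R) := D `&` [set w | t <= rho w].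
Definition rho_gt (t : R) := D `&` [set w | t < rho w].

Lemma measurable_rho_ge t : measurable (rho_ge t).
Proof. exact/measurableI/measurable_superlevel. Qed.

Lemma measurable_rho_gt t : measurable (rho_gt t).
Proof. exact/measurableI/measurable_strict_superlevel. Qed.

Lemma rho_ge_anti (s t : R) : s <= t -> rho_ge t `<=` rho_ge s.
Proof. by move=> st w [Dw tw]; split => //; exact: le_trans tw. Qed.

Lemma mu_rho_ge_cvg_bigcup (s : nat -> R) : {homo s : m n / (m <= n)%N >-> n <= m} ->
  mu (rho_ge (s k)) @[k --> \oo] --> mu (\bigcup_k rho_ge (s k)).
Proof.
move=> s_anti; apply: nondecreasing_cvg_mu => [k||m n mn].
- exact: measurable_rho_ge.
- by apply: bigcup_measurable => k _; exact: measurable_rho_ge.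
- exact/subsetPset/rho_ge_anti/s_anti.
Qed.

Lemma mu_rho_ge_cvg_bigcap (s : nat -> R) : {homo s : m n / (m <= n)%N >-> m <= n} ->
  mu (rho_ge (s k)) @[k --> \oo] --> mu (\bigcap_k rho_ge (s k)).
Proof.
move=> s_mono; apply: nonincreasing_cvg_mu => [|k||m n mn].
- by rewrite ltey_eq fin_num_measure //; exact: measurable_rho_ge.
- exact: measurable_rho_ge.
- by apply: bigcapT_measurable => k; exact: measurable_rho_ge.
- exact/subsetPset/rho_ge_anti/s_mono.
Qed.

Lemma mu_rho_ge_cvgNy : mu (rho_ge (- k%:R)) @[k --> \oo] --> mu D.
Proof.
have -> : D = \bigcup_k rho_ge (- k%:R).
  apply/seteqP; split => [w Dw|w [k _ []] //]; exists (Num.bound `|rho w|) => //.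
  split => //=; have := archi_boundP (normr_ge0 (rho w)).
  by have := ler_norm (- rho w); rewrite normrN; lra.
by apply: mu_rho_ge_cvg_bigcup => m n mn; rewrite lerN2 ler_nat.
Qed.

Lemma mu_rho_ge_cvgy : mu (rho_ge k%:R) @[k --> \oo] --> 0%E.
Proof.
rewrite -(measure0 mu); have -> : set0 = \bigcap_k rho_ge k%:R.
  apply/seteqP; split => // w /(_ (Num.bound `|rho w|) I) [_ /=].
  by have := archi_boundP (normr_ge0 (rho w)); have := ler_norm (rho w); lra.
by apply: mu_rho_ge_cvg_bigcap => m n mn; rewrite ler_nat.
Qed.

Lemma mu_rho_ge_cvg_left (t : R) : mu (rho_ge (t - k.+1%:R^-1)) @[k --> \oo] --> mu (rho_ge t).
Proof.
have -> : rho_ge t = \bigcap_k rho_ge (t - k.+1%:R^-1).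
  apply/seteqP; split => [w tw k _|w tw].
    by apply: rho_ge_anti tw; rewrite gerBl invr_ge0.
  have [Dw _] := tw 0%N I; split => //=; rewrite leNgt; apply/negP.
  rewrite -subr_gt0 => /exists_invn_lt [k kt].
  by have [_ /= tk] := tw k I; move: kt tk; set e := k.+1%:R^-1 => kt tk; lra.
apply: mu_rho_ge_cvg_bigcap => m n mn.
by rewrite lerD2l lerN2 lef_pV2 ?posrE ?ltr0n // ler_nat.
Qed.

Lemma mu_rho_ge_cvg_right (t : R) : mu (rho_ge (t + k.+1%:R^-1)) @[k --> \oo] --> mu (rho_gt t).
Proof.
have -> : rho_gt t = \bigcup_k rho_ge (t + k.+1%:R^-1).
  apply/seteqP; split => [w [Dw /= tw]|w [k _ [Dw /= tw]]].
    have [k kt] : exists k : nat, k.+1%:R^-1 < rho w - t by apply: exists_invn_lt; lra.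
    by exists k => //; split => //=; move: kt; set e := k.+1%:R^-1 => kt; lra.
  have e0 : 0 < k.+1%:R^-1 :> R by rewrite invr_gt0 ltr0n.
  by split => //=; move: tw e0; set e := k.+1%:R^-1 => tw e0; lra.
apply: mu_rho_ge_cvg_bigcup => m n mn.
by rewrite lerD2l lef_pV2 ?posrE ?ltr0n // ler_nat.
Qed.

Lemma exists_quantile n : 0 < n < fine (mu D) ->
  exists t, fine (mu (rho_gt t)) <= n <= fine (mu (rho_ge t)).
Proof.
move=> /andP[n0 nD].
have fineKmu S : measurable S -> (fine (mu S))%:E = mu S.
  by move=> mS; rewrite fineK // fin_num_measure.
pose S := [set s | n%:E <= mu (rho_ge s)]%E.
have [s0 Ss0] : exists s, S s.
  apply: contrapT => /forallNP nS.
  have : (mu D <= n%:E)%E.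
    apply: (cvg_ereal_le mu_rho_ge_cvgNy) => k.
    by apply/ltW; rewrite ltNge; apply/negP/nS.
  by rewrite leNgt -fineKmu // lte_fin nD.
have [K K_notS] : exists K : nat, (mu (rho_ge K%:R) < n%:E)%E.
  apply: contrapT => /forallNP nK.
  have : (n%:E <= 0)%E.
    apply: (cvg_ereal_ge mu_rho_ge_cvgy) => k.
    by rewrite leNgt; apply/negP/nK.
  by rewrite leNgt lte_fin n0.
have S_ub : ubound S K%:R.
  move=> s Ss; rewrite leNgt; apply/negP => Ks.
  have : (mu (rho_ge s) <= mu (rho_ge K%:R))%E.
    by apply: le_measure; rewrite ?inE; [exact: measurable_rho_ge..|exact/rho_ge_anti/ltW].
  by rewrite leNgt (lt_le_trans K_notS Ss).
have supS : has_sup S by split; [exists s0 | exists K%:R].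
exists (sup S); rewrite -!lee_fin !fineKmu;
  [|exact: measurable_rho_ge|exact: measurable_rho_gt].
apply/andP; split.
  apply: (cvg_ereal_le (@mu_rho_ge_cvg_right (sup S))) => k.
  apply/ltW; rewrite ltNge; apply/negP => Sk.
  have := @sup_upper_bound _ S supS (sup S + k.+1%:R^-1) Sk.
  by rewrite leNgt ltrDl invr_gt0 ltr0n.
apply: (cvg_ereal_ge (@mu_rho_ge_cvg_left (sup S))) => k.
have e0 : 0 < k.+1%:R^-1 :> R by rewrite invr_gt0 ltr0n.
have [s Ss ts] := sup_adherent e0 supS.
by apply: le_trans Ss _; apply/le_measure; rewrite ?inE;
  [exact: measurable_rho_ge..|exact/rho_ge_anti/ltW].
Qed.

Lemma Rintegral_threshold_test t gam :
  \int[mu]_(w in D) threshold_test t gam (rho w) =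
  (1 - gam) * fine (mu (rho_gt t)) + gam * fine (mu (rho_ge t)).
Proof.
have indic_rho (b : R -> bool) w : \1_[set z | b z] (rho w) = \1_[set w | b (rho w)] w :> R.
  by rewrite !indic_mkset.
under eq_Rintegral do rewrite threshold_test_indicE !indic_rho subKr.
have mgt : measurable [set w | t < rho w] by exact: measurable_strict_superlevel.
have mge : measurable [set w | t <= rho w] by exact: measurable_superlevel.
have igt := mfun01_integrable mu mD (mfun01_indic mgt).
have ige := mfun01_integrable mu mD (mfun01_indic mge).
rewrite RintegralD ?RintegralZl ?Rintegral_indic //; try exact: integrableZl_EFin.
by rewrite [_ `&` D]setIC [in X in _ + X]setIC.
Qed.

Theorem neyman_pearson n : mu.-integrable D (EFin \o rho) -> 0 < n < fine (mu D) ->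
  exists2 phi : R -> R, mfun01 phi &
    \int[mu]_(w in D) phi (rho w) = n /\
    forall f, mfun01 f -> \int[mu]_(w in D) f w = n ->
      \int[mu]_(w in D) (f w * rho w) <= \int[mu]_(w in D) (phi (rho w) * rho w).
Proof.
move=> irho n_in; have [t tn] := exists_quantile n_in.
have [gam gam01 gamE] := exists_convex_combination tn.
have phi01 := mfun01_threshold_test t gam01.
have phi_n : \int[mu]_(w in D) threshold_test t gam (rho w) = n.
  by rewrite Rintegral_threshold_test -gamE; ring.
exists (threshold_test t gam) => //; split => // f f01 fn.
have phirho := mfun01_comp mrho phi01.
have iphi := mfun01_integrable mu mD phirho; have i_f := mfun01_integrable mu mD f01.
have iphirho := integrable_mfun01_mul mD phirho irho.
have ifrho := integrable_mfun01_mul mD f01 irho.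
pose psi w := threshold_test t gam (rho w) - f w.
have ipsi : mu.-integrable D (EFin \o psi) by exact: integrableB_EFin.
have ipsirho : mu.-integrable D (EFin \o (fun w => psi w * rho w)).
  have := integrableB_EFin mD iphirho ifrho.
  by apply: eq_integrable => // w _; rewrite /= mulrBl.
have psi0 : \int[mu]_(w in D) psi w = 0 by rewrite RintegralB ?phi_n ?fn ?subrr.
(* psi has integral 0, so its rho-moment is its (rho - t)-moment, whose
   integrand is nonnegative by the choice of the threshold t. *)
rewrite -subr_ge0.
have -> : \int[mu]_(w in D) (threshold_test t gam (rho w) * rho w) -
    \int[mu]_(w in D) (f w * rho w) = \int[mu]_(w in D) (psi w * rho w - t * psi w).
  rewrite RintegralB ?RintegralZl ?psi0 ?mulr0 ?subr0 //; last exact: integrableZl_EFin.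
  by rewrite -RintegralB //; apply: eq_Rintegral => w _; rewrite /psi mulrBl.
apply: Rintegral_ge0 => w _; rewrite [t * _]mulrC -mulrBr.
by apply: threshold_test_sign => //; have [_] := f01.
Qed.

End NeymanPearson.

(** * Fairness-constrained prediction *)

Lemma measurable_bool_eq {d} {T : measurableType d} (B : T -> bool) (b : bool) :
  measurable [set w | B w] -> measurable [set w | B w = b].
Proof.
case: b => mB; first exact: mB.
have -> : [set w | B w = false] = ~` [set w | B w].
  by apply/seteqP; split => w /=; case: (B w).
exact: measurableC.
Qed.

Lemma measurable_fun_bool_case {d} {T : measurableType d} {R : realType}
    (B : T -> bool) (F : bool -> T -> R) :
  measurable [set w | B w] -> (forall b, measurable_fun setT (F b)) ->
  measurable_fun setT (fun w => F (B w) w).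
Proof.
move=> mB mF; have -> : (fun w => F (B w) w) = (fun w => if B w then F true w else F false w).
  by apply/funext => w; case: (B w).
apply: measurable_fun_ifT => //; apply: (measurable_fun_bool true); rewrite setTI.
by have -> : B @^-1` [set true] = [set w | B w] by apply/seteqP; split => w /=.
Qed.

Section Fairness.
Context {R : realType} {dO : measure_display} {Omega : measurableType dO}
  (P : probability Omega R) {dX : measure_display} {TX : measurableType dX}
  (X : Omega -> TX) (A Y : Omega -> bool).
Hypotheses (mX : measurable_fun setT X) (mA : measurable [set w | A w])
  (mY : measurable [set w | Y w]).

Definition grp (a : bool) : set Omega := [set w | A w = a].

Lemma measurable_grp a : measurable (grp a).
Proof. exact: measurable_bool_eq. Qed.

Lemma measurable_ev_AY a y : measurable (ev_AY A Y a y).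
Proof. exact: measurableI (measurable_grp a) (measurable_bool_eq y mY). Qed.

Lemma grp_split a : grp a = ev_AY A Y a true `|` ev_AY A Y a false.
Proof.
apply/seteqP; split => [w /= Aw|w [] [Aw _] //].
by rewrite /ev_AY /=; case: (Y w); [left|right].
Qed.

Lemma Rintegral_grp_split a f : P.-integrable (grp a) (EFin \o f) ->
  \int[P]_(w in grp a) f w =
  \int[P]_(w in ev_AY A Y a true) f w + \int[P]_(w in ev_AY A Y a false) f w.
Proof.
rewrite grp_split => f_int; rewrite Rintegral_setU //; try exact: measurable_ev_AY.
by apply/eqP/seteqP; split => // w [[_ Yt] [_]]; rewrite Yt.
Qed.

Lemma Rintegral_cells f : P.-integrable setT (EFin \o f) ->
  \int[P]_w f w = \sum_(a : bool) \sum_(y : bool) \int[P]_(w in ev_AY A Y a y) f w.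
Proof.
move=> f_int; have -> : [set: Omega] = grp true `|` grp false.
  by apply/seteqP; split => // w _; rewrite /grp /=; case: (A w); [left|right].
rewrite Rintegral_setU; try exact: measurable_grp.
- by rewrite big_bool !big_bool !Rintegral_grp_split //;
    apply: integrableS f_int => //; exact: measurable_grp.
- by apply: integrableS f_int => //; apply: measurableU; exact: measurable_grp.
- by apply/eqP/seteqP; split => // w [At Af]; move: Af; rewrite /grp /= At.
Qed.

Definition grp_mass a := fine (P (grp a)).

Lemma grp_massE a : grp_mass a = prob_AY P A Y a true + prob_AY P A Y a false.
Proof.
have one_int : P.-integrable (grp a) (EFin \o (fun _ => 1)).
  apply: (mfun01_integrable P); first exact: measurable_grp.
  by apply: mfun01_cst; rewrite ler01 lexx.
have := Rintegral_grp_split one_int.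
by rewrite !Rintegral_cst ?mul1r //; [exact: measurable_ev_AY..|exact: measurable_grp].
Qed.

Definition pos_masses a (g : TX -> R) : R * R :=
  (\int[P]_(w in ev_AY A Y a true) g (X w), \int[P]_(w in ev_AY A Y a false) g (X w)).

(* [stats p] lists the masses P{Yhat = 1, A = a, Y = y} as
   ((a = 1, y = 1), (a = 1, y = 0)), ((a = 0, y = 1), (a = 0, y = 0)). *)
Definition stats (p : TX -> bool -> R) : (R * R) * (R * R) :=
  (pos_masses true (p ^~ true), pos_masses false (p ^~ false)).

Definition coord a y (v : (R * R) * (R * R)) : R :=
  let u := if a then v.1 else v.2 in if y then u.1 else u.2.

Lemma continuous_coord a y : continuous (coord a y).
Proof.
have c1 := @fst_continuous (R * R)%type (R * R)%type.
have c2 := @snd_continuous (R * R)%type (R * R)%type.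
have [c11 c12] := (@fst_continuous R R, @snd_continuous R R).
by case: a; case: y => v; rewrite /coord /=;
  [exact: (continuous_comp (c1 v) (c11 _)) | exact: (continuous_comp (c1 v) (c12 _))
  |exact: (continuous_comp (c2 v) (c11 _)) | exact: (continuous_comp (c2 v) (c12 _))].
Qed.

Lemma prob_pos_AY_stats (p : TX -> bool -> R) a y :
  prob_pos_AY P X A Y p a y = coord a y (stats p).
Proof.
rewrite /prob_pos_AY (@eq_Rintegral _ _ _ _ _ (fun w => p (X w) a)) => [|w /set_mem [->] //].
by case: a; case: y.
Qed.

Definition rate a y v := coord a y v / prob_AY P A Y a y.

Lemma cond_rate_stats (p : TX -> bool -> R) a y :
  cond_rate P X A Y p a y = rate a y (stats p).
Proof. by rewrite /cond_rate prob_pos_AY_stats. Qed.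

Lemma continuous_rate a y : continuous (rate a y).
Proof.
move=> v; rewrite /rate.
exact: (continuousM (@continuous_coord a y v) (@cst_continuous _ _ (prob_AY P A Y a y)^-1 v)).
Qed.

Lemma rate_stats0 a y : rate a y (stats (fun _ _ => 0)) = 0.
Proof.
rewrite /rate; case: a; case: y;
  by rewrite /= Rintegral_cst ?mul0r //; exact: measurable_ev_AY.
Qed.

Definition excess_loss (l : bool -> bool -> R) v :=
  (l true true - l false true) * (coord true true v + coord false true v) +
  (l true false - l false false) * (coord true false v + coord false false v).

Lemma continuous_excess_loss l : continuous (excess_loss l).
Proof.
move=> v; have cc := continuous_coord.
have ctp := continuousD (cc true true v) (cc false true v).
have cfp := continuousD (cc true false v) (cc false false v).
exact: (continuousD (continuousM (@cst_continuous _ _ (l true true - l false true) v) ctp)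
                    (continuousM (@cst_continuous _ _ (l true false - l false false) v) cfp)).
Qed.

Lemma mfun01_predictor_XA (p : TX -> bool -> R) :
  randomized_predictor p -> mfun01 (fun w => p (X w) (A w)).
Proof.
move=> [p01 mp]; split => [|w]; last exact: p01.
exact: (measurable_fun_bool_case (F := fun b w => p (X w) b) mA
  (fun b => measurableT_comp (mp b) mX)).
Qed.

Lemma integrable_label_fun (D : set Omega) (f : bool -> R) : measurable D ->
  P.-integrable D (EFin \o (fun w => f (Y w))).
Proof.
move=> mD; have mfY : measurable_fun setT (fun w => f (Y w)).
  by apply: (measurable_fun_bool_case (F := fun b _ => f b) mY) => b; exact: measurable_cst.
apply: measurable_bounded_integrable => //.
- by rewrite ltey_eq fin_num_measure.
- exact: measurable_funS mfY.
apply: (bounded_normr_le (c := `|f true| + `|f false|)) => w.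
by case: (Y w); rewrite ?lerDl ?lerDr.
Qed.

Lemma expected_lossE l (p : TX -> bool -> R) : randomized_predictor p ->
  expected_loss P X A Y l p = \int[P]_w l false (Y w) + excess_loss l (stats p).
Proof.
move=> p_rp; have pXA := mfun01_predictor_XA p_rp.
have lY_int b : P.-integrable setT (EFin \o (fun w => l b (Y w))).
  exact: integrable_label_fun.
have gain_int : P.-integrable setT
    (EFin \o (fun w => p (X w) (A w) * (l true (Y w) - l false (Y w)))).
  by apply: integrable_mfun01_mul => //; exact: integrableB_EFin.
rewrite /expected_loss (@eq_Rintegral _ _ _ _ _
  (fun w => l false (Y w) + p (X w) (A w) * (l true (Y w) - l false (Y w)))); last first.
  by move=> w _; ring.
rewrite RintegralD //; congr (_ + _); rewrite Rintegral_cells //.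
have cell a y : \int[P]_(w in ev_AY A Y a y) (p (X w) (A w) * (l true (Y w) - l false (Y w))) =
    (l true y - l false y) * coord a y (stats p).
  rewrite (@eq_Rintegral _ _ _ _ _ (fun w => p (X w) (A w) * (l true y - l false y))).
    rewrite RintegralZr -?prob_pos_AY_stats 1?mulrC //; first exact: measurable_ev_AY.
    by apply: (mfun01_integrable P) => //; exact: measurable_ev_AY.
  by move=> w /set_mem [_ ->].
by rewrite !big_bool /= !cell /excess_loss; ring.
Qed.

Variable r : TX -> bool -> R.
Hypothesis hr : bayes_regressor P X A Y r.

Lemma measurable_regressor a : measurable_fun setT (r ^~ a).
Proof. by have [] := hr. Qed.

Lemma integrable_regressor a : P.-integrable (grp a) (EFin \o (fun w => r (X w) a)).
Proof.
have [_ [r_int _]] := hr.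
apply: (eq_integrable (measurable_grp a) (fun w => (r (X w) (A w))%:E)) => [w /set_mem /= -> //|].
by apply: integrableS r_int => //; exact: measurable_grp.
Qed.

Lemma bayes_indic a B : measurable B ->
  \int[P]_(w in grp a) (\1_B (X w) * r (X w) a) = \int[P]_(w in ev_AY A Y a true) \1_B (X w).
Proof.
move=> mB; have [_ [_ bayes]] := hr.
transitivity (\int[P]_(w in X @^-1` B `&` grp a) r (X w) (A w)).
  rewrite Rintegral_mkcondl patch_indic; apply: eq_Rintegral => w /set_mem /= ->.
  by rewrite mulrC.
rewrite -bayes // Rintegral_mkcondl patch_indic.
have -> : ev_AY A Y a true = grp a `&` [set w | Y w] by [].
rewrite Rintegral_mkcondr patch_indic; apply: eq_Rintegral => w _ /=.
by rewrite indic_mkset mulrC.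
Qed.

Lemma bayes_identity a (g : TX -> R) : mfun01 g ->
  \int[P]_(w in grp a) (g (X w) * r (X w) a) = \int[P]_(w in ev_AY A Y a true) g (X w).
Proof.
apply: Rintegral_comp_eq_of_indic => //.
- exact: measurable_grp.
- exact: measurable_ev_AY.
- exact: integrable_regressor.
- exact: bayes_indic.
Qed.

Lemma mfun01_comp_X (g : TX -> R) : mfun01 g -> mfun01 (fun w => g (X w)).
Proof. exact: mfun01_comp. Qed.

Lemma mfun01_comp_regressor a (phi : R -> R) : mfun01 phi -> mfun01 (fun x => phi (r x a)).
Proof. by apply: mfun01_comp; exact: measurable_regressor. Qed.

Lemma randomized_predictor_mfun01 (p : TX -> bool -> R) :
  randomized_predictor p -> forall a, mfun01 (p ^~ a).
Proof. by move=> [p01 mp] a; split => // x; exact: p01. Qed.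

Lemma derived_randomized q :
  derived_kernel q -> randomized_predictor (derived_predictor q r).
Proof.
move=> [q01 mq]; split => [x a|a]; first exact: q01.
exact: measurableT_comp (mq a) (measurable_regressor a).
Qed.

Lemma Rintegral_grp_in a (g : TX -> R) : mfun01 g ->
  0 <= \int[P]_(w in grp a) g (X w) <= grp_mass a.
Proof.
by move=> g01; apply: Rintegral_mfun01_in; [exact: measurable_grp | exact: mfun01_comp_X].
Qed.

Lemma Rintegral_ev_AY_in a y (g : TX -> R) : mfun01 g ->
  0 <= \int[P]_(w in ev_AY A Y a y) g (X w) <= prob_AY P A Y a y.
Proof.
by move=> g01; apply: Rintegral_mfun01_in; [exact: measurable_ev_AY | exact: mfun01_comp_X].
Qed.

Lemma Rintegral_grpE a (g : TX -> R) : mfun01 g ->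
  \int[P]_(w in grp a) g (X w) = (pos_masses a g).1 + (pos_masses a g).2.
Proof.
move=> g01; apply: Rintegral_grp_split; apply: (mfun01_integrable P (measurable_grp a)).
exact: mfun01_comp_X.
Qed.

Definition np_test a n (phi : R -> R) :=
  [/\ mfun01 phi, \int[P]_(w in grp a) phi (r (X w) a) = n &
      forall g : TX -> R, mfun01 g -> \int[P]_(w in grp a) g (X w) = n ->
        \int[P]_(w in ev_AY A Y a true) g (X w) <=
        \int[P]_(w in ev_AY A Y a true) phi (r (X w) a)].

(* Constant tests handle the extreme masses; otherwise bayes_identity turns
   true-positive masses into moments of r (X w) a, which the Neyman-Pearson
   lemma maximises. *)
Lemma exists_np_test a n : 0 <= n <= grp_mass a -> exists phi, np_test a n phi.
Proof.
move=> /andP[n0 nM]; have [->|n_neq0] := eqVneq n 0.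
  exists (fun _ => 0); split; first by apply: mfun01_cst; rewrite lexx ler01.
    by rewrite Rintegral_cst ?mul0r //; exact: measurable_grp.
  move=> g g01; rewrite Rintegral_grpE // Rintegral_cst ?mul0r; last exact: measurable_ev_AY.
  by have /andP[? _] := Rintegral_ev_AY_in a false g01; rewrite /=; lra.
have [->|n_neqM] := eqVneq n (grp_mass a).
  exists (fun _ => 1); split; first by apply: mfun01_cst; rewrite lexx ler01.
    by rewrite Rintegral_cst ?mul1r //; exact: measurable_grp.
  move=> g g01 _; rewrite Rintegral_cst ?mul1r; last exact: measurable_ev_AY.
  by have /andP[_ ?] := Rintegral_ev_AY_in a true g01.
have n_in : 0 < n < fine (P (grp a)).
  by rewrite !lt_neqAle eq_sym n_neq0 n_neqM n0 nM.
have mrho : measurable_fun setT (fun w => r (X w) a).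
  exact: measurableT_comp (measurable_regressor a) mX.
have [phi phi01 [phi_n phi_opt]] :=
  neyman_pearson (measurable_grp a) mrho (integrable_regressor a) n_in.
exists phi; split => // g g01 gn.
have phir01 := mfun01_comp_regressor a phi01.
rewrite -(bayes_identity a g01) -(bayes_identity a phir01).
exact: phi_opt (mfun01_comp_X g01) gn.
Qed.

Lemma exists_np_family : exists Phi : bool -> R -> R -> R,
  forall a n, 0 <= n <= grp_mass a -> np_test a n (Phi a n).
Proof.
have tests (an : bool * R) :
    exists phi, 0 <= an.2 <= grp_mass an.1 -> np_test an.1 an.2 phi.
  case: an => a n; have [/exists_np_test [phi np]|_] := boolP (0 <= n <= grp_mass a).
    by exists phi.
  by exists (fun _ => 0).
have [Phi PhiP] := choice tests.
by exists (fun a n => Phi (a, n)) => a n; exact: (PhiP (a, n)).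
Qed.

Section ValueFunction.
Variable Phi : bool -> R -> R -> R.
Hypothesis Phi_np : forall a n, 0 <= n <= grp_mass a -> np_test a n (Phi a n).

(* The clamp extends the maximal true-positive mass, meaningful for positive
   masses n in [0, P{A = a}], to a 1-Lipschitz function on R. *)
Definition tp_max a n :=
  \int[P]_(w in ev_AY A Y a true) Phi a (clamp 0 (grp_mass a) n) (r (X w) a).

Section FixedGroup.
Variable a : bool.

Local Notation M := (grp_mass a).
Local Notation pi1 := (prob_AY P A Y a true).
Local Notation pi0 := (prob_AY P A Y a false).

Lemma grp_mass_ge0 : 0 <= M.
Proof. exact/fine_ge0/measure_ge0. Qed.

Lemma mfun01_np_test n : mfun01 (fun x => Phi a (clamp 0 M n) (r x a)).
Proof.
have [phi01 _ _] := Phi_np (clamp_in n grp_mass_ge0).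
exact: mfun01_comp_regressor.
Qed.

Lemma np_test_mass n : 0 <= n <= M -> \int[P]_(w in grp a) Phi a n (r (X w) a) = n.
Proof. by move=> n_in; have [] := Phi_np n_in. Qed.

Lemma tp_maxE n : 0 <= n <= M ->
  tp_max a n = \int[P]_(w in ev_AY A Y a true) Phi a n (r (X w) a).
Proof. by move=> n_in; rewrite /tp_max clamp_id. Qed.

Lemma tp_max_ub (g : TX -> R) : mfun01 g ->
  \int[P]_(w in ev_AY A Y a true) g (X w) <= tp_max a (\int[P]_(w in grp a) g (X w)).
Proof.
move=> g01; have g_in := Rintegral_grp_in a g01.
by rewrite tp_maxE //; have [_ _] := Phi_np g_in; apply.
Qed.

Lemma tp_max_in n : 0 <= tp_max a n <= pi1.
Proof. exact: Rintegral_ev_AY_in (mfun01_np_test n). Qed.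

Lemma tp_max_le n : 0 <= n <= M -> tp_max a n <= n.
Proof.
move=> n_in; have := mfun01_np_test n; rewrite clamp_id // => phi01.
rewrite tp_maxE // -[X in _ <= X]np_test_mass // (Rintegral_grpE a phi01) /=.
by have /andP[? _] := Rintegral_ev_AY_in a false phi01; lra.
Qed.

Lemma tp_max_lb (g : TX -> R) : mfun01 g ->
  pi1 - tp_max a (M - \int[P]_(w in grp a) g (X w)) <= \int[P]_(w in ev_AY A Y a true) g (X w).
Proof.
move=> g01; have := tp_max_ub (mfun01_1m g01).
rewrite !Rintegral_1m -/M -/pi1; [lra|exact: measurable_grp|exact: mfun01_comp_X|..].
  exact: measurable_ev_AY.
exact: mfun01_comp_X.
Qed.

Lemma tp_max_mono n m : 0 <= n -> n <= m -> m <= M -> tp_max a n <= tp_max a m.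
Proof.
move=> n0 nm mM; have n_in : 0 <= n <= M by rewrite n0 (le_trans nm).
have phi01 := mfun01_np_test n; rewrite clamp_id // in phi01.
have [c c01 cm] : exists2 c, 0 <= c <= 1 & c * M + (1 - c) * n = m.
  by apply: exists_convex_combination; rewrite nm mM.
have one01 : mfun01 (fun _ : TX => 1 : R) by apply: mfun01_cst; rewrite lexx ler01.
have := tp_max_ub (mfun01_convex c01 one01 phi01).
have phiX := mfun01_comp_X phi01; have oneX := mfun01_comp_X one01.
rewrite !Rintegral_convex_comb ?Rintegral_cst ?mul1r ?np_test_mass -?tp_maxE -/M -/pi1 ?cm //;
  try exact: measurable_ev_AY; try exact: measurable_grp.
have /andP[_ tp_n] := tp_max_in n; have /andP[c0 c1] := c01; nra.
Qed.

Lemma tp_max_lipschitz_le n m : 0 <= n -> n <= m -> m <= M ->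
  tp_max a m - tp_max a n <= m - n.
Proof.
move=> n0 nm mM; have m_in : 0 <= m <= M by rewrite mM (le_trans n0).
have phi01 := mfun01_np_test m; rewrite clamp_id // in phi01.
have [c c01 cn] : exists2 c, 0 <= c <= 1 & c * m + (1 - c) * 0 = n.
  by apply: exists_convex_combination; rewrite n0 nm.
have zero01 : mfun01 (fun _ : TX => 0 : R) by apply: mfun01_cst; rewrite lexx ler01.
have := tp_max_ub (mfun01_convex c01 phi01 zero01).
have phiX := mfun01_comp_X phi01; have zeroX := mfun01_comp_X zero01.
rewrite !Rintegral_convex_comb ?Rintegral_cst ?mul0r ?np_test_mass -?tp_maxE ?cn //;
  try exact: measurable_ev_AY; try exact: measurable_grp.
have /andP[tp0 _] := tp_max_in m; have := tp_max_le m_in.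
have /andP[c0 c1] := c01; nra.
Qed.

Lemma tp_max_1lipschitz n m : `|tp_max a n - tp_max a m| <= `|n - m|.
Proof.
have tp_clamp k : tp_max a (clamp 0 M k) = tp_max a k.
  by rewrite /tp_max clamp_id // clamp_in // grp_mass_ge0.
rewrite -(tp_clamp n) -(tp_clamp m); apply: le_trans (clamp_1lipschitz 0 M n m).
have := clamp_in n grp_mass_ge0; have := clamp_in m grp_mass_ge0.
move: (clamp 0 M n) (clamp 0 M m) => {}n {}m /andP[m0 mM] /andP[n0 nM].
wlog nm : n m n0 nM m0 mM / n <= m.
  move=> h; case: (leP n m) => [|/ltW] nm; first exact: h.
  by rewrite distrC [`|n - m|]distrC; exact: h.
rewrite distrC [`|n - m|]distrC !ger0_norm ?subr_ge0 ?tp_max_mono //.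
exact: tp_max_lipschitz_le.
Qed.

Lemma continuous_tp_max : continuous (tp_max a).
Proof. exact/continuous_1lipschitz/tp_max_1lipschitz. Qed.

(* The lower boundary comes from complementing predictors (tp_max_lb). *)
Definition region : set (R * R) := [set u | 0 <= u.1 + u.2 <= M /\
  pi1 - tp_max a (M - (u.1 + u.2)) <= u.1 <= tp_max a (u.1 + u.2)].

Lemma pos_masses_in_region (g : TX -> R) : mfun01 g -> region (pos_masses a g).
Proof.
move=> g01; have := Rintegral_grpE a g01; rewrite /region /= => <-.
by split; [exact: Rintegral_grp_in | rewrite tp_max_lb ?tp_max_ub].
Qed.

Lemma region_sub_box : region `<=` `[0, pi1] `*` `[0, pi0].
Proof.
move=> [t f] [/= s_in /andP[lo hi]]; have /andP[s0 sM] := s_in.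
have Ms_in : 0 <= M - (t + f) <= M by apply/andP; split; lra.
have := tp_max_in (t + f); have := tp_max_in (M - (t + f)).
have := tp_max_le s_in; have := tp_max_le Ms_in; have := grp_massE a.
by rewrite /= !in_itv /= => *; split; apply/andP; split; lra.
Qed.

Lemma closed_region : closed region.
Proof.
have cs : continuous (fun u : R * R => u.1 + u.2).
  by move=> u; exact: (continuousD (@fst_continuous R R u) (@snd_continuous R R u)).
have cU : continuous (fun u : R * R => tp_max a (u.1 + u.2)).
  by move=> u; exact: (continuous_comp (cs u) (@continuous_tp_max _)).
have cMs : continuous (fun u : R * R => M - (u.1 + u.2)).
  by move=> u; exact: (continuousB (@cst_continuous _ _ M u) (cs u)).
have cL : continuous (fun u : R * R => pi1 - tp_max a (M - (u.1 + u.2))).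
  move=> u; apply: (continuousB (@cst_continuous _ _ pi1 u)).
  exact: (continuous_comp (cMs u) (@continuous_tp_max _)).
have -> : region = [set u | 0 <= u.1 + u.2] `&` [set u | u.1 + u.2 <= M] `&`
    [set u | pi1 - tp_max a (M - (u.1 + u.2)) <= u.1] `&` [set u | u.1 <= tp_max a (u.1 + u.2)].
  apply/seteqP; split => u /=; first by move=> [/andP[? ?] /andP[? ?]].
  by move=> [[[? ?] ?] ?]; split; apply/andP.
have cfst := @fst_continuous R R.
by repeat apply: closedI; apply: closed_fun_le => //; exact: cst_continuous.
Qed.

Lemma region_derived u : region u ->
  exists psi : R -> R, mfun01 psi /\ pos_masses a (fun x => psi (r x a)) = u.
Proof.
case: u => t f [/= s_in /andP[lo hi]]; set s := t + f in s_in lo hi *.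
have Ms_in : 0 <= M - s <= M by have /andP[? ?] := s_in; apply/andP; split; lra.
have [c c01 ct] : exists2 c, 0 <= c <= 1 &
    c * tp_max a s + (1 - c) * (pi1 - tp_max a (M - s)) = t.
  by apply: exists_convex_combination; rewrite lo hi.
have [phi01 _ _] := Phi_np s_in; have [phi'01 _ _] := Phi_np Ms_in.
pose psi z := c * Phi a s z + (1 - c) * (1 - Phi a (M - s) z).
have psi01 : mfun01 psi by apply: mfun01_convex => //; exact: mfun01_1m.
have phiX := mfun01_comp_X (mfun01_comp_regressor a phi01).
have phi'X := mfun01_comp_X (mfun01_comp_regressor a phi'01).
have tp_psi : \int[P]_(w in ev_AY A Y a true) psi (r (X w) a) = t.
  rewrite Rintegral_convex_comb ?Rintegral_1m -?tp_maxE //;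
    try exact: measurable_ev_AY; exact: mfun01_1m.
have mass_psi : \int[P]_(w in grp a) psi (r (X w) a) = s.
  rewrite Rintegral_convex_comb ?Rintegral_1m ?np_test_mass -/M //;
    [ring | exact: measurable_grp..|exact: mfun01_1m].
exists psi; split => //; rewrite /pos_masses tp_psi; congr (_, _).
have := Rintegral_grpE a (mfun01_comp_regressor a psi01).
by rewrite mass_psi /pos_masses /= tp_psi /s; lra.
Qed.

End FixedGroup.

Definition feasible (E : set ((R * R) * (R * R))) :=
  [set v | region true v.1 /\ region false v.2] `&` E.

Lemma stats_feasible E (p : TX -> bool -> R) : randomized_predictor p ->
  E (stats p) -> feasible E (stats p).
Proof.
move=> /randomized_predictor_mfun01 p01 Ep; split => //.
by split; apply: pos_masses_in_region; exact: p01.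
Qed.

Lemma compact_feasible E : closed E -> compact (feasible E).
Proof.
move=> cE; apply: (@subclosed_compact _ _
  ((`[0, prob_AY P A Y true true] `*` `[0, prob_AY P A Y true false]) `*`
   (`[0, prob_AY P A Y false true] `*` `[0, prob_AY P A Y false false]))).
- apply: closedI cE; apply: closedI.
  + exact: (preimage_closed (fun v _ => @fst_continuous _ _ v) (@closed_region true)).
  + exact: (preimage_closed (fun v _ => @snd_continuous _ _ v) (@closed_region false)).
- by apply: compact_setX; apply: compact_setX; exact: segment_compact.
- by move=> v [[/region_sub_box ? /region_sub_box ?] _].
Qed.

Lemma exists_optimal_stats l E : closed E -> E (stats (fun _ _ => 0)) ->
  exists2 v, feasible E v & forall w, feasible E w -> excess_loss l v <= excess_loss l w.
Proof.
move=> cE E0; have zero_rp : randomized_predictor (fun (_ : TX) (_ : bool) => 0 : R).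
  by split => [x a|a]; [rewrite lexx ler01 | exact: measurable_cst].
have [v /set_mem v_feas v_min] := compact_EVT_min
  (ex_intro _ _ (stats_feasible zero_rp E0)) (compact_feasible cE)
  (continuous_subspaceT (@continuous_excess_loss l)).
by exists v => // w w_feas; apply: v_min; exact: mem_set.
Qed.

Lemma feasible_derived E v : feasible E v ->
  exists q, derived_kernel q /\ stats (derived_predictor q r) = v.
Proof.
case: v => v1 v0 [[/region_derived [psi1 [psi1_01 psi1_v]]]].
move=> /region_derived [psi0 [psi0_01 psi0_v]] _.
pose q z a := if a then psi1 z else psi0 z.
have q01 a : mfun01 (q ^~ a) by case: a.
exists q; split; last by rewrite /stats psi1_v psi0_v.
by split => [z a|a]; have [mqa qa01] := q01 a.
Qed.

End ValueFunction.

Theorem fair_optimal_derived l (E : set ((R * R) * (R * R))) :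
  closed E -> E (stats (fun _ _ => 0)) ->
  exists q : R -> bool -> R, derived_kernel q /\ E (stats (derived_predictor q r)) /\
    forall p, randomized_predictor p -> E (stats p) ->
      expected_loss P X A Y l (derived_predictor q r) <= expected_loss P X A Y l p.
Proof.
move=> cE E0; have [Phi Phi_np] := exists_np_family.
have [v v_feas v_min] := exists_optimal_stats Phi_np l cE E0.
have [q [q_dk q_v]] := feasible_derived Phi_np v_feas.
exists q; split => //; split; first by rewrite q_v; case: v_feas.
move=> p p_rp Ep; rewrite !expected_lossE ?q_v ?lerD2l //; last exact: derived_randomized.
exact/v_min/stats_feasible.
Qed.

End Fairness.

Theorem corollary5p3 (R : realType) (dO : measure_display)
  (Omega : measurableType dO) (P : probability Omega R)
  (dX : measure_display) (TX : measurableType dX)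
  (X : Omega -> TX) (A Y : Omega -> bool)
  (mX : measurable_fun setT X)
  (mA : measurable [set w | A w]) (mY : measurable [set w | Y w])
  (r : TX -> bool -> R) (hr : bayes_regressor P X A Y r)
  (l : bool -> bool -> R) :
  (exists q : R -> bool -> R,
     derived_kernel q /\
     equalized_odds P X A Y (derived_predictor q r) /\
     forall p : TX -> bool -> R, randomized_predictor p ->
       equalized_odds P X A Y p ->
       expected_loss P X A Y l (derived_predictor q r) <= expected_loss P X A Y l p)
  /\
  (exists q : R -> bool -> R,
     derived_kernel q /\
     equal_opportunity P X A Y (derived_predictor q r) /\
     forall p : TX -> bool -> R, randomized_predictor p ->
       equal_opportunity P X A Y p ->
       expected_loss P X A Y l (derived_predictor q r) <= expected_loss P X A Y l p).
Proof.
pose rate_eq y := [set v | rate P A Y false y v = rate P A Y true y v].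
have closed_rate_eq y : closed (rate_eq y).
  by apply: closed_fun_eq; exact: continuous_rate.
have rate_eq0 y : rate_eq y (stats P X A Y (fun _ _ => 0)).
  by rewrite /rate_eq /= !(rate_stats0 P X mA mY).
split.
- have [|q [q_dk [q_eo q_opt]]] := fair_optimal_derived mX mA mY hr l
    (closedI (closed_rate_eq true) (closed_rate_eq false)).
    by split; exact: rate_eq0.
  have EO p : equalized_odds P X A Y p <-> (rate_eq true `&` rate_eq false) (stats P X A Y p).
    rewrite /equalized_odds /rate_eq /=; split => [eo|[e1 e0] y].
      by split; rewrite -!cond_rate_stats; exact: eo.
    by case: y; rewrite !cond_rate_stats.
  exists q; split => //; split; first exact/EO.
  by move=> p p_rp /EO; exact: q_opt.
- have [//|q [q_dk [q_eo q_opt]]] := fair_optimal_derived mX mA mY hr l (closed_rate_eq true).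
  exists q; split => //; split => [|p p_rp p_eo].
    by rewrite /equal_opportunity !cond_rate_stats.
  by apply: q_opt => //; rewrite /rate_eq /= -!cond_rate_stats.
Qed.
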